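(* Suppose that $G \leq \mathrm{Homeo}^+(\mathbb{R})$ acts on $\mathbb{R}$ with no fixed points, and that $G^0 \neq 1$. Let $\Omega$ be a set on which $G$ acts faithfully and $2$-transitively. Then at least one of the following happens: (1) $G^0$ is regular on $\Omega$; (2) for every $x \in \mathbb{R}$, for every orbit $O^- \subset \Omega$ of $G_x^-$ and every orbit $O^+ \subset \Omega$ of $G_x^+$, we have $|O^- \cap O^+| \leq 1$.
   Context: $\mathrm{Homeo}^+(\mathbb{R})$ is the group of orientation-preserving homeomorphisms of $\mathbb{R}$. $G^0$ denotes the subgroup of compactly supported elements of $G$. For $x \in \mathbb{R}$, $G_x$ is the stabilizer of $x$ in $G$, and $G_x^-$, $G_x^+$ are the subgroups of $G_x$ consisting of elements supported in $(-\infty, x]$ and $[x, +\infty)$ respectively (i.e. acting trivially outside these sets). A permutation group is regular if it is transitive and all point stabilizers are trivial. $2$-transitive means transitive on ordered pairs of distinct elements. *)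

From Stdlib Require Import Reals.
Open Scope R_scope.

(* Orientation-preserving homeomorphisms of R: continuous bijections
   that are strictly increasing (the inverse of such a map is then
   automatically continuous). *)
Definition is_homeo_plus (f : R -> R) : Prop :=
  continuity f /\
  (forall x y, x < y -> f x < f y) /\
  (forall y, exists x, f x = y).

(* G, given as a predicate on functions R -> R, is a subgroup of Homeo^+(R).
   Group elements are compared pointwise. *)
Definition subgroup_homeo_plus (G : (R -> R) -> Prop) : Prop :=
  (forall f, G f -> is_homeo_plus f) /\
  G (fun x => x) /\
  (forall f g, G f -> G g -> G (fun x => f (g x))) /\
  (forall f, G f -> exists g, G g /\ (forall x, f (g x) = x) /\ (forall x, g (f x) = x)).

Definition no_fixed_points (G : (R -> R) -> Prop) : Prop :=
  forall x, exists g, G g /\ g x <> x.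

Definition is_identity (g : R -> R) : Prop := forall x, g x = x.

Definition compactly_supported (g : R -> R) : Prop :=
  exists a b, forall y, (y < a \/ b < y) -> g y = y.

Definition G0 (G : (R -> R) -> Prop) (g : R -> R) : Prop :=
  G g /\ compactly_supported g.

Definition Gxm (G : (R -> R) -> Prop) (x : R) (g : R -> R) : Prop :=
  G g /\ g x = x /\ (forall y, x < y -> g y = y).

Definition Gxp (G : (R -> R) -> Prop) (x : R) (g : R -> R) : Prop :=
  G g /\ g x = x /\ (forall y, y < x -> g y = y).

Definition is_action (G : (R -> R) -> Prop) (Omega : Type)
  (act : (R -> R) -> Omega -> Omega) : Prop :=
  (forall w, act (fun x => x) w = w) /\
  (forall f g w, G f -> G g -> act (fun x => f (g x)) w = act f (act g w)).

Definition faithful_action (G : (R -> R) -> Prop) (Omega : Type)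
  (act : (R -> R) -> Omega -> Omega) : Prop :=
  forall g, G g -> (forall w, act g w = w) -> is_identity g.

Definition two_transitive (G : (R -> R) -> Prop) (Omega : Type)
  (act : (R -> R) -> Omega -> Omega) : Prop :=
  forall a b c d : Omega, a <> b -> c <> d ->
    exists g, G g /\ act g a = c /\ act g b = d.

Definition regular_on (H : (R -> R) -> Prop) (Omega : Type)
  (act : (R -> R) -> Omega -> Omega) : Prop :=
  (forall a b : Omega, exists h, H h /\ act h a = b) /\
  (forall h w, H h -> act h w = w -> is_identity h).

Definition orbit (H : (R -> R) -> Prop) (Omega : Type)
  (act : (R -> R) -> Omega -> Omega) (w : Omega) (z : Omega) : Prop :=
  exists h, H h /\ act h w = z.

From Stdlib Require Import Reals.
From Stdlib Require Import Lra Classical FunctionalExtensionality.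
Open Scope R_scope.

(* If two distinct points a, b of Omega lie in one G_x^- orbit and in one
   G_x^+ orbit, then, since G_x^+ and G_x^- commute, a and b are fixed by
   exactly the same elements of G_x^+ and of G_x^-: they are "linked" at x.
   By 2-transitivity every pair of points is then linked at some y.  As
   G_y^+ shrinks when y grows and G_y^- shrinks when y decreases, linking
   forbids two elements with fixed points and separated supports (one in
   (-oo, q], the other in [p, +oo) with q < p) from both acting nontrivially.
   A compactly supported element with a fixed point, together with a
   conjugate pushed to the right of its support (orbits on R are unbounded
   since G has no global fixed point), forms such a pair; so G^0 acts freely,
   and it is transitive by 2-transitivity since it is nontrivial. *)

Section HomeoSubgroup.

Variable G : (R -> R) -> Prop.
Hypothesis HG : subgroup_homeo_plus G.

Lemma G_id : G (fun x => x).
Proof. exact (proj1 (proj2 HG)). Qed.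

Lemma G_comp f g : G f -> G g -> G (fun x => f (g x)).
Proof. exact (proj1 (proj2 (proj2 HG)) f g). Qed.

Lemma G_conj g h gi : G g -> G h -> G gi -> G (fun t => g (h (gi t))).
Proof. intros Gg Gh Ggi. apply G_comp; [|apply G_comp]; assumption. Qed.

Lemma G_inv f : G f ->
  exists g, G g /\ (forall x, f (g x) = x) /\ (forall x, g (f x) = x).
Proof. exact (proj2 (proj2 (proj2 HG)) f). Qed.

Lemma G_lt f x y : G f -> x < y -> f x < f y.
Proof. intro Gf. exact (proj1 (proj2 (proj1 HG f Gf)) x y). Qed.

Lemma G_le_iff f x y : G f -> f x <= f y <-> x <= y.
Proof.
  intro Gf. split; intro Hle.
  - apply Rnot_lt_le. intro Hlt. pose proof (G_lt f y x Gf Hlt). lra.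
  - destruct (Rle_lt_or_eq_dec _ _ Hle) as [Hlt | ->].
    + left. apply G_lt; assumption.
    + right. reflexivity.
Qed.

Lemma G_lt_iff f x y : G f -> f x < f y <-> x < y.
Proof.
  intro Gf. split; [|apply G_lt; exact Gf].
  intro Hlt. apply Rnot_le_lt. intro Hyx.
  apply (G_le_iff f y x Gf) in Hyx. lra.
Qed.

Lemma conj_fixes_below g gi k p : G g -> (forall t, g (gi t) = t) ->
  (forall t, t < p -> k t = t) -> forall t, t < g p -> g (k (gi t)) = t.
Proof.
  intros Gg Hggi Hk t Ht. rewrite Hk; [apply Hggi|].
  apply (G_lt_iff g _ _ Gg). rewrite Hggi. exact Ht.
Qed.

Lemma conj_fixes_above g gi k q : G g -> (forall t, g (gi t) = t) ->
  (forall t, q < t -> k t = t) -> forall t, g q < t -> g (k (gi t)) = t.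
Proof.
  intros Gg Hggi Hk t Ht. rewrite Hk; [apply Hggi|].
  apply (G_lt_iff g _ _ Gg). rewrite Hggi. exact Ht.
Qed.

Lemma compactly_supported_conj g gi n : G g -> (forall t, g (gi t) = t) ->
  compactly_supported n -> compactly_supported (fun t => g (n (gi t))).
Proof.
  intros Gg Hggi [p [q Hn]]. exists (g p), (g q). intros t [Ht | Ht].
  - apply (conj_fixes_below g gi n p); auto.
  - apply (conj_fixes_above g gi n q); auto.
Qed.

Lemma lub_orbit_le p s h : is_lub (fun r => exists g, G g /\ r = g p) s ->
  G h -> s <= h s.
Proof.
  intros [Hub Hleast] Gh. apply Hleast. intros r [g [Gg ->]].
  destruct (G_inv h Gh) as [hi [Ghi [Hhhi _]]].
  rewrite <- (Hhhi (g p)). apply (G_le_iff h _ _ Gh).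
  apply Hub. exists (fun x => hi (g x)). split; [apply G_comp|]; auto.
Qed.

Lemma lub_orbit_fixed p s h : is_lub (fun r => exists g, G g /\ r = g p) s ->
  G h -> h s = s.
Proof.
  intros Hs Gh. destruct (G_inv h Gh) as [hi [Ghi [Hhhi _]]].
  apply Rle_antisym.
  - rewrite <- (Hhhi s) at 2. apply (G_le_iff h _ _ Gh).
    exact (lub_orbit_le p s hi Hs Ghi).
  - exact (lub_orbit_le p s h Hs Gh).
Qed.

Lemma orbit_unbounded_above : no_fixed_points G ->
  forall p q, exists g, G g /\ q < g p.
Proof.
  intros Hnf p q. apply NNPP. intro Hbounded.
  destruct (completeness (fun r => exists g, G g /\ r = g p)) as [s Hs].
  - exists q. intros r [g [Gg ->]]. apply Rnot_lt_le. intro Hlt.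
    apply Hbounded. exists g. split; assumption.
  - exists p, (fun x => x). split; [exact G_id | reflexivity].
  - destruct (Hnf s) as [h [Gh Hhs]]. exact (Hhs (lub_orbit_fixed p s h Hs Gh)).
Qed.

Lemma Gxp_antitone x y k : x <= y -> Gxp G y k -> Gxp G x k.
Proof.
  intros Hxy [Gk [Hky Hk]]. split; [exact Gk | split].
  - destruct (Rle_lt_or_eq_dec _ _ Hxy) as [Hlt | ->]; [apply Hk; exact Hlt | exact Hky].
  - intros t Ht. apply Hk. lra.
Qed.

Lemma Gxm_monotone x y k : x <= y -> Gxm G x k -> Gxm G y k.
Proof.
  intros Hxy [Gk [Hkx Hk]]. split; [exact Gk | split].
  - destruct (Rle_lt_or_eq_dec _ _ Hxy) as [Hlt | <-]; [apply Hk; exact Hlt | exact Hkx].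
  - intros t Ht. apply Hk. lra.
Qed.

Lemma Gxp_of_support k p x : G k -> (forall t, t < p -> k t = t) -> x < p ->
  Gxp G x k.
Proof.
  intros Gk Hk Hxp. split; [exact Gk | split].
  - apply Hk. exact Hxp.
  - intros t Ht. apply Hk. lra.
Qed.

Lemma Gxm_of_support k q x : G k -> (forall t, q < t -> k t = t) -> q < x ->
  Gxm G x k.
Proof.
  intros Gk Hk Hqx. split; [exact Gk | split].
  - apply Hk. exact Hqx.
  - intros t Ht. apply Hk. lra.
Qed.

Lemma Gxp_Gxm_commute x k h : Gxp G x k -> Gxm G x h ->
  forall t, k (h t) = h (k t).
Proof.
  intros [Gk [Hkx Hk]] [Gh [Hhx Hh]] t.
  destruct (Rtotal_order t x) as [Hlt | [-> | Hgt]].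
  - rewrite (Hk t Hlt), Hk; [reflexivity|]. rewrite <- Hhx. apply G_lt; assumption.
  - rewrite Hhx, Hkx, Hhx. reflexivity.
  - rewrite (Hh t Hgt), (Hh (k t)); [reflexivity|]. rewrite <- Hkx. apply G_lt; assumption.
Qed.

Lemma Gxp_conj g gi x k : G g -> G gi -> (forall t, gi (g t) = t) ->
  Gxp G (g x) k -> Gxp G x (fun t => gi (k (g t))).
Proof.
  intros Gg Ggi Hgig [Gk [Hkx Hk]]. split; [|split].
  - apply G_conj; assumption.
  - rewrite Hkx. apply Hgig.
  - intros t Ht. rewrite Hk; [apply Hgig | apply G_lt; assumption].
Qed.

Lemma Gxm_conj g gi x k : G g -> G gi -> (forall t, gi (g t) = t) ->
  Gxm G (g x) k -> Gxm G x (fun t => gi (k (g t))).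
Proof.
  intros Gg Ggi Hgig [Gk [Hkx Hk]]. split; [|split].
  - apply G_conj; assumption.
  - rewrite Hkx. apply Hgig.
  - intros t Ht. rewrite Hk; [apply Hgig | apply G_lt; assumption].
Qed.

Section Action.

Variable Omega : Type.
Variable act : (R -> R) -> Omega -> Omega.
Hypothesis Ha : is_action G Omega act.

Lemma act_ext f g w : (forall t, f t = g t) -> act f w = act g w.
Proof. intro Hfg. rewrite (functional_extensionality f g Hfg). reflexivity. Qed.

Lemma act_comp f g w : G f -> G g -> act (fun x => f (g x)) w = act f (act g w).
Proof. exact (proj2 Ha f g w). Qed.

Lemma act_cancel f g w : G f -> G g -> (forall t, g (f t) = t) ->
  act g (act f w) = w.
Proof.
  intros Gf Gg Hgf. rewrite <- act_comp by assumption.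
  rewrite (act_ext _ (fun x => x)) by exact Hgf. apply (proj1 Ha).
Qed.

Lemma act_inj_iff f u v : G f -> act f u = act f v <-> u = v.
Proof.
  intro Gf. split; [|intros ->; reflexivity]. intro Huv.
  destruct (G_inv f Gf) as [fi [Gfi [_ Hfif]]].
  rewrite <- (act_cancel f fi u), <- (act_cancel f fi v), Huv by assumption.
  reflexivity.
Qed.

Lemma act_conj g h gi w : G g -> G h -> G gi ->
  act (fun t => g (h (gi t))) w = act g (act h (act gi w)).
Proof.
  intros Gg Gh Ggi.
  rewrite (act_comp g (fun t => h (gi t))), (act_comp h gi) by
    first [assumption | apply G_comp; assumption].
  reflexivity.
Qed.

Lemma act_commute k h w : G k -> G h -> (forall t, k (h t) = h (k t)) ->
  act k (act h w) = act h (act k w).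
Proof.
  intros Gk Gh Hkh. rewrite <- !act_comp by assumption. apply act_ext. exact Hkh.
Qed.

Definition same_fixers (H : (R -> R) -> Prop) (c d : Omega) : Prop :=
  forall k, H k -> (act k c = c <-> act k d = d).

Lemma same_fixers_refl H c : same_fixers H c c.
Proof. intros k _. reflexivity. Qed.

Lemma same_fixers_sym H c d : same_fixers H c d -> same_fixers H d c.
Proof. intros Hcd k Hk. symmetry. exact (Hcd k Hk). Qed.

Lemma same_fixers_trans H c d e :
  same_fixers H c d -> same_fixers H d e -> same_fixers H c e.
Proof. intros Hcd Hde k Hk. rewrite (Hcd k Hk). exact (Hde k Hk). Qed.

Lemma same_fixers_sub H H' c d : (forall k, H' k -> H k) ->
  same_fixers H c d -> same_fixers H' c d.
Proof. intros Hsub Hcd k Hk. exact (Hcd k (Hsub k Hk)). Qed.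

Lemma same_fixers_orbit H K w a b :
  (forall h, H h -> G h) -> (forall k, K k -> G k) ->
  (forall k h, K k -> H h -> forall t, k (h t) = h (k t)) ->
  orbit H Omega act w a -> orbit H Omega act w b -> same_fixers K a b.
Proof.
  intros HsubG KsubG Hcomm [h1 [Hh1 <-]] [h2 [Hh2 <-]] k Hk.
  assert (Hfix : forall h, H h -> act k (act h w) = act h w <-> act k w = w).
  { intros h Hh. rewrite act_commute by auto. apply act_inj_iff. auto. }
  rewrite (Hfix h1 Hh1), (Hfix h2 Hh2). reflexivity.
Qed.

Lemma same_fixers_conj H H' g gi c d : G g -> G gi -> (forall t, g (gi t) = t) ->
  (forall k, H' k -> G k /\ H (fun t => gi (k (g t)))) ->
  same_fixers H c d -> same_fixers H' (act g c) (act g d).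
Proof.
  intros Gg Ggi Hggi Hconj Hcd k Hk. destruct (Hconj k Hk) as [Gk Hk'].
  assert (Hmove : forall u, act k (act g u) = act g (act (fun t => gi (k (g t))) u)).
  { assert (Gk' : G (fun t => gi (k (g t)))) by (apply G_conj; assumption).
    intro u. rewrite <- !act_comp by assumption.
    apply act_ext. intro t. rewrite Hggi. reflexivity. }
  rewrite !Hmove, !act_inj_iff by assumption. exact (Hcd _ Hk').
Qed.

Definition linked (y : R) (c d : Omega) : Prop :=
  same_fixers (Gxp G y) c d /\ same_fixers (Gxm G y) c d.

Lemma linked_conj g y c d : G g -> linked y c d -> linked (g y) (act g c) (act g d).
Proof.
  intros Gg [Hp Hm]. destruct (G_inv g Gg) as [gi [Ggi [Hggi Hgig]]].
  split.
  - apply (same_fixers_conj (Gxp G y) _ g gi); try assumption.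
    intros k Hk. split; [apply Hk | apply Gxp_conj; assumption].
  - apply (same_fixers_conj (Gxm G y) _ g gi); try assumption.
    intros k Hk. split; [apply Hk | apply Gxm_conj; assumption].
Qed.

Lemma linked_of_orbits x wm wp a b :
  orbit (Gxm G x) Omega act wm a -> orbit (Gxp G x) Omega act wp a ->
  orbit (Gxm G x) Omega act wm b -> orbit (Gxp G x) Omega act wp b ->
  linked x a b.
Proof.
  intros Ham Hap Hbm Hbp. split.
  - apply (same_fixers_orbit (Gxm G x) _ wm); try assumption.
    + intros h Hh. apply Hh.
    + intros k Hk. apply Hk.
    + intros k h Hk Hh. apply (Gxp_Gxm_commute x); assumption.
  - apply (same_fixers_orbit (Gxp G x) _ wp); try assumption.
    + intros h Hh. apply Hh.
    + intros k Hk. apply Hk.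
    + intros k h Hk Hh t. symmetry. apply (Gxp_Gxm_commute x); assumption.
Qed.

Lemma linked_everywhere x a b : two_transitive G Omega act -> a <> b ->
  linked x a b -> forall c d, exists y, linked y c d.
Proof.
  intros H2 Hab Hx c d. destruct (classic (c = d)) as [<- | Hcd].
  - exists x. split; apply same_fixers_refl.
  - destruct (H2 a b c d Hab Hcd) as [g [Gg [<- <-]]].
    exists (g x). apply linked_conj; assumption.
Qed.

Section Linked.

Hypothesis Hlinked : forall c d, exists y, linked y c d.

Variables (n1 n2 : R -> R) (q p : R).
Hypotheses (Gn1 : G n1) (Gn2 : G n2) (Hqp : q < p)
  (Hn1 : forall t, q < t -> n1 t = t) (Hn2 : forall t, t < p -> n2 t = t).

Lemma common_fixed_point a1 a2 : act n1 a1 = a1 -> act n2 a2 = a2 ->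
  exists a, act n1 a = a /\ act n2 a = a.
Proof.
  intros Ha1 Ha2. destruct (Hlinked a1 a2) as [y [Hyp Hym]].
  destruct (Rlt_le_dec y p) as [Hy | Hy].
  - exists a1. split; [exact Ha1|].
    apply (Hyp n2); [exact (Gxp_of_support n2 p y Gn2 Hn2 Hy) | exact Ha2].
  - exists a2. split; [|exact Ha2].
    apply (Hym n1); [exact (Gxm_of_support n1 q y Gn1 Hn1 ltac:(lra)) | exact Ha1].
Qed.

Lemma separated_supports_fix a1 a2 e1 e2 : act n1 a1 = a1 -> act n2 a2 = a2 ->
  act n1 e1 = e1 \/ act n2 e2 = e2.
Proof.
  intros Ha1 Ha2. destruct (common_fixed_point a1 a2 Ha1 Ha2) as [a [Fa1 Fa2]].
  assert (Sep1 : forall z, q < z -> same_fixers (Gxm G z) a e1 -> act n1 e1 = e1).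
  { intros z Hz Hs. apply (Hs n1); [exact (Gxm_of_support n1 q z Gn1 Hn1 Hz) | exact Fa1]. }
  assert (Sep2 : forall z, z < p -> same_fixers (Gxp G z) a e2 -> act n2 e2 = e2).
  { intros z Hz Hs. apply (Hs n2); [exact (Gxp_of_support n2 p z Gn2 Hn2 Hz) | exact Fa2]. }
  destruct (Hlinked e1 e2) as [y [Hyp Hym]].
  destruct (Rlt_le_dec y p) as [Hy | Hy].
  - destruct (Hlinked a e1) as [y1 [Hy1p Hy1m]].
    destruct (Rle_lt_dec y1 q) as [Hy1 | Hy1]; [right | left; exact (Sep1 y1 Hy1 Hy1m)].
    apply (Sep2 (Rmax y1 y)); [apply Rmax_lub_lt; lra|].
    apply (same_fixers_trans _ _ e1).
    + apply (same_fixers_sub (Gxp G y1)); [|exact Hy1p].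
      intro k. apply Gxp_antitone, Rmax_l.
    + apply (same_fixers_sub (Gxp G y)); [|exact Hyp].
      intro k. apply Gxp_antitone, Rmax_r.
  - destruct (Hlinked a e2) as [y2 [Hy2p Hy2m]].
    destruct (Rlt_le_dec y2 p) as [Hy2 | Hy2]; [right; exact (Sep2 y2 Hy2 Hy2p) | left].
    apply (Sep1 (Rmin y2 y)); [apply Rmin_glb_lt; lra|].
    apply (same_fixers_trans _ _ e2).
    + apply (same_fixers_sub (Gxm G y2)); [|exact Hy2m].
      intro k. apply Gxm_monotone, Rmin_l.
    + apply same_fixers_sym, (same_fixers_sub (Gxm G y)); [|exact Hym].
      intro k. apply Gxm_monotone, Rmin_r.
Qed.

End Linked.

Lemma G0_free : (forall c d, exists y, linked y c d) -> no_fixed_points G ->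
  faithful_action G Omega act ->
  forall h w, G0 G h -> act h w = w -> is_identity h.
Proof.
  intros Hlinked Hnf Hfaith h w [Gh [p [q Hsupp]]] Hw.
  apply Hfaith; [exact Gh|]. intro e.
  destruct (orbit_unbounded_above Hnf p q) as [g [Gg Hgp]].
  destruct (G_inv g Gg) as [gi [Ggi [Hggi Hgig]]].
  set (h' := fun t => g (h (gi t))).
  assert (Gh' : G h') by (apply G_conj; assumption).
  assert (Hh' : forall u, act h' (act g u) = act g (act h u)).
  { intro u. unfold h'. rewrite act_conj, (act_cancel g gi u) by assumption. reflexivity. }
  destruct (separated_supports_fix Hlinked h h' q (g p) Gh Gh' Hgp
              (fun t Ht => Hsupp t (or_intror Ht))
              (conj_fixes_below g gi h p Gg Hggi (fun t Ht => Hsupp t (or_introl Ht)))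
              w (act g w) e (act g e) Hw) as [He | He].
  - rewrite Hh', Hw. reflexivity.
  - exact He.
  - rewrite Hh' in He. exact (proj1 (act_inj_iff g _ _ Gg) He).
Qed.

Lemma G0_transitive : faithful_action G Omega act -> two_transitive G Omega act ->
  (exists n, G0 G n /\ ~ is_identity n) ->
  forall a b, exists h, G0 G h /\ act h a = b.
Proof.
  intros Hfaith H2 [n [[Gn Hn] Hnid]] a b.
  destruct (classic (a = b)) as [<- | Hab].
  { exists (fun x => x). split; [split; [exact G_id | exists 0, 0; reflexivity] | apply Ha]. }
  destruct (not_all_ex_not _ _ (fun Hfix => Hnid (Hfaith n Gn Hfix))) as [c Hc].
  destruct (H2 c (act n c) a b (not_eq_sym Hc) Hab) as [g [Gg [Hga Hgb]]].
  destruct (G_inv g Gg) as [gi [Ggi [Hggi Hgig]]].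
  exists (fun t => g (n (gi t))). split; [split|].
  - apply G_conj; assumption.
  - apply compactly_supported_conj; assumption.
  - rewrite act_conj, <- Hga, (act_cancel g gi c); assumption.
Qed.

End Action.

End HomeoSubgroup.

Theorem proposition5p1 (G : (R -> R) -> Prop) (Omega : Type)
  (act : (R -> R) -> Omega -> Omega) :
  subgroup_homeo_plus G ->
  no_fixed_points G ->
  (exists g, G0 G g /\ ~ is_identity g) ->
  is_action G Omega act ->
  faithful_action G Omega act ->
  two_transitive G Omega act ->
  regular_on (G0 G) Omega act \/
  (forall (x : R) (wm wp : Omega) (a b : Omega),
      orbit (Gxm G x) Omega act wm a -> orbit (Gxp G x) Omega act wp a ->
      orbit (Gxm G x) Omega act wm b -> orbit (Gxp G x) Omega act wp b ->
      a = b).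
Proof.
  intros HG Hnf Hn Ha Hfaith H2.
  destruct (classic (regular_on (G0 G) Omega act)) as [Hreg | Hnreg];
    [left; exact Hreg | right].
  intros x wm wp a b Ham Hap Hbm Hbp.
  apply NNPP. intro Hab. apply Hnreg.
  assert (Hlinked : forall c d, exists y, linked G Omega act y c d).
  { apply (linked_everywhere G HG Omega act Ha x a b H2 Hab).
    exact (linked_of_orbits G HG Omega act Ha x wm wp a b Ham Hap Hbm Hbp). }
  split.
  - exact (G0_transitive G HG Omega act Ha Hfaith H2 Hn).
  - exact (G0_free G HG Omega act Ha Hlinked Hnf Hfaith).
Qed.
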